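(* Let $\mathcal{F}=(X,\leq,R)$ be a GC-frame. Then $(\mathcal{T}_\leq,\cup,\cap,{}^\blacktriangle,{}^\blacktriangledown,\emptyset,X)$ is a BDLGC-algebra; in particular, $A^\blacktriangle\in\mathcal{T}_\leq$ and $A^\blacktriangledown\in\mathcal{T}_\leq$ for every $A\in\mathcal{T}_\leq$.
   Context: A GC-frame $(X,\leq,R)$ is a set $X$ with a quasiorder (reflexive, transitive relation) $\leq$ and a relation $R\subseteq X\times X$ such that $x\leq x'$, $x\,R\,y$ and $y'\leq y$ imply $x'\,R\,y'$. $\mathcal{T}_\leq$ is the set of all $B\subseteq X$ with: $x\in B$ and $x\leq y$ imply $y\in B$. For $A\subseteq X$: $A^\blacktriangle=\{x\in X\mid x\,R\,y\text{ for some }y\in A\}$ and $A^\blacktriangledown=\{x\in X\mid\text{for all }y,\ y\,R\,x\text{ implies }y\in A\}$. A BDLGC-algebra $(L,\vee,\wedge,f,g,0,1)$ is a bounded distributive lattice with maps $f,g\colon L\to L$ such that $f(a)\leq b\iff a\leq g(b)$ for all $a,b\in L$. *)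

Set Implicit Arguments.

Section GC.
Context {X : Type}.

Definition quasiorder (le : X -> X -> Prop) : Prop :=
  (forall x, le x x) /\ (forall x y z, le x y -> le y z -> le x z).

Definition GC_frame (le R : X -> X -> Prop) : Prop :=
  quasiorder le /\
  (forall x x' y y', le x x' -> R x y -> le y' y -> R x' y').

(* membership in T_<= : up-closed subsets *)
Definition upset (le : X -> X -> Prop) (B : X -> Prop) : Prop :=
  forall x y, B x -> le x y -> B y.

Definition set_union (A B : X -> Prop) : X -> Prop := fun x => A x \/ B x.
Definition set_inter (A B : X -> Prop) : X -> Prop := fun x => A x /\ B x.
Definition set_empty : X -> Prop := fun _ => False.
Definition set_full : X -> Prop := fun _ => True.

Definition up_tri (R : X -> X -> Prop) (A : X -> Prop) : X -> Prop :=
  fun x => exists y, A y /\ R x y.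
Definition down_tri (R : X -> X -> Prop) (A : X -> Prop) : X -> Prop :=
  fun x => forall y, R y x -> A y.
End GC.

(* A BDLGC-algebra whose carrier is the subset L of a type T:
   L is closed under the operations, (L, join, meet, zero, one) is a
   bounded distributive lattice, and f(a) <= b <-> a <= g(b) on L,
   where a <= b is the lattice order  meet a b = a. *)
Record BDLGC_algebra {T : Type} (L : T -> Prop) (join meet : T -> T -> T)
    (f g : T -> T) (zero one : T) : Prop := {
  cl_join : forall a b, L a -> L b -> L (join a b);
  cl_meet : forall a b, L a -> L b -> L (meet a b);
  cl_f : forall a, L a -> L (f a);
  cl_g : forall a, L a -> L (g a);
  cl_zero : L zero;
  cl_one : L one;
  join_assoc : forall a b c, L a -> L b -> L c ->
    join a (join b c) = join (join a b) c;
  meet_assoc : forall a b c, L a -> L b -> L c ->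
    meet a (meet b c) = meet (meet a b) c;
  join_comm : forall a b, L a -> L b -> join a b = join b a;
  meet_comm : forall a b, L a -> L b -> meet a b = meet b a;
  join_absorb : forall a b, L a -> L b -> join a (meet a b) = a;
  meet_absorb : forall a b, L a -> L b -> meet a (join a b) = a;
  meet_distr : forall a b c, L a -> L b -> L c ->
    meet a (join b c) = join (meet a b) (meet a c);
  zero_bot : forall a, L a -> join zero a = a;
  one_top : forall a, L a -> meet one a = a;
  galois : forall a b, L a -> L b ->
    (meet (f a) b = f a <-> meet a (g b) = a)
}.

(* The subsets of X form a Boolean algebra under union and intersection, and
   up-closed subsets are closed under these operations, so they form a bounded
   distributive lattice.  The image A^▲ and the "box" A^▼ along R satisfy
   A^▲ ⊆ B iff A ⊆ B^▼ for arbitrary subsets.  Finally, the compatibility of R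
   with ≤ (together with reflexivity of ≤) makes A^▲ and A^▼ up-closed for
   every A, not only for up-closed A. *)
From Stdlib Require Import FunctionalExtensionality PropExtensionality.

Section SetAlgebra.
Context {X : Type}.
Implicit Types A B C : X -> Prop.

Definition subset A B : Prop := forall x, A x -> B x.

Lemma set_ext A B : (forall x, A x <-> B x) -> A = B.
Proof.
  intro H; apply functional_extensionality; intro x.
  apply propositional_extensionality; apply H.
Qed.

Lemma set_unionA A B C :
  set_union A (set_union B C) = set_union (set_union A B) C.
Proof. apply set_ext; unfold set_union; tauto. Qed.

Lemma set_interA A B C :
  set_inter A (set_inter B C) = set_inter (set_inter A B) C.
Proof. apply set_ext; unfold set_inter; tauto. Qed.

Lemma set_unionC A B : set_union A B = set_union B A.
Proof. apply set_ext; unfold set_union; tauto. Qed.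

Lemma set_interC A B : set_inter A B = set_inter B A.
Proof. apply set_ext; unfold set_inter; tauto. Qed.

Lemma set_unionKI A B : set_union A (set_inter A B) = A.
Proof. apply set_ext; unfold set_union, set_inter; tauto. Qed.

Lemma set_interKU A B : set_inter A (set_union A B) = A.
Proof. apply set_ext; unfold set_union, set_inter; tauto. Qed.

Lemma set_interUr A B C :
  set_inter A (set_union B C) = set_union (set_inter A B) (set_inter A C).
Proof. apply set_ext; unfold set_union, set_inter; tauto. Qed.

Lemma set_union0 A : set_union set_empty A = A.
Proof. apply set_ext; unfold set_union, set_empty; tauto. Qed.

Lemma set_interT A : set_inter set_full A = A.
Proof. apply set_ext; unfold set_inter, set_full; tauto. Qed.

Lemma set_interEl A B : set_inter A B = A <-> subset A B.
Proof.
  split.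
  - intros HAB x Ax; rewrite <- HAB in Ax; apply Ax.
  - intro HAB; apply set_ext; unfold set_inter; firstorder.
Qed.

End SetAlgebra.

Section Upsets.
Context {X : Type} (le : X -> X -> Prop).
Implicit Types A B : X -> Prop.

Lemma upset_union A B : upset le A -> upset le B -> upset le (set_union A B).
Proof. unfold upset, set_union; firstorder. Qed.

Lemma upset_inter A B : upset le A -> upset le B -> upset le (set_inter A B).
Proof. unfold upset, set_inter; firstorder. Qed.

Lemma upset_empty : upset le set_empty.
Proof. unfold upset, set_empty; tauto. Qed.

Lemma upset_full : upset le set_full.
Proof. unfold upset, set_full; tauto. Qed.

End Upsets.

Section Triangles.
Context {X : Type} (le R : X -> X -> Prop).
Implicit Types A B : X -> Prop.

Lemma up_tri_subset A B : subset (up_tri R A) B <-> subset A (down_tri R B).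
Proof. unfold subset, up_tri, down_tri; firstorder. Qed.

Lemma up_tri_galois A B :
  set_inter (up_tri R A) B = up_tri R A <-> set_inter A (down_tri R B) = A.
Proof. rewrite !set_interEl; apply up_tri_subset. Qed.

Hypothesis le_refl : forall x, le x x.
Hypothesis R_mono : forall x x' y y', le x x' -> R x y -> le y' y -> R x' y'.

Lemma upset_up_tri A : upset le (up_tri R A).
Proof.
  intros x x' [y [Ay Rxy]] le_xx'.
  exists y; split; [exact Ay | apply (R_mono x x' y y); auto].
Qed.

Lemma upset_down_tri A : upset le (down_tri R A).
Proof.
  intros x x' Hx le_xx' y Ryx'.
  apply Hx, (R_mono y y x' x); auto.
Qed.

End Triangles.

Theorem lemma3p6 (X : Type) (le R : X -> X -> Prop) :
  GC_frame le R ->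
  BDLGC_algebra (upset le) (@set_union X) (@set_inter X)
    (up_tri R) (down_tri R) (@set_empty X) (@set_full X) /\
  (forall A : X -> Prop, upset le A ->
     upset le (up_tri R A) /\ upset le (down_tri R A)).
Proof.
  intros [[le_refl _] R_mono].
  split.
  - constructor; intros.
    + now apply upset_union.
    + now apply upset_inter.
    + now apply upset_up_tri.
    + now apply upset_down_tri.
    + apply upset_empty.
    + apply upset_full.
    + apply set_unionA.
    + apply set_interA.
    + apply set_unionC.
    + apply set_interC.
    + apply set_unionKI.
    + apply set_interKU.
    + apply set_interUr.
    + apply set_union0.
    + apply set_interT.
    + apply up_tri_galois.
  - intros A _; split; [apply upset_up_tri | apply upset_down_tri]; assumption.
Qed.
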